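(* Let $\mathcal{M}$ be a $k\times\ell$ monotone gridding matrix that has a consistent orientation. If the cell graph $G_\mathcal{M}$ is a forest, then every permutation in $\mathrm{Grid}(\mathcal{M})$ has path-width at most $\max(k,\ell)$.
   Context: $\mathrm{Inc}$ and $\mathrm{Dec}$ denote the classes of increasing and decreasing permutations. A $k\times\ell$ monotone gridding matrix $\mathcal{M}$ has entries $\mathcal{M}_{i,j}\in\{\mathrm{Inc},\mathrm{Dec},\emptyset\}$ ($i$ indexes columns left to right, $j$ rows bottom to top). A $k\times\ell$-gridding of a permutation $\pi$ of length $n$ (identified with its diagram $\{(i,\pi_i)\}$) consists of possibly empty disjoint integer intervals $I_1<\dots<I_k$ and $J_1<\dots<J_\ell$, each family with union $[n]$; it is an $\mathcal{M}$-gridding if the points in each cell $I_i\times J_j$ form a pattern in $\mathcal{M}_{i,j}$; $\mathrm{Grid}(\mathcal{M})$ is the class of permutations with an $\mathcal{M}$-gridding. The cell graph $G_\mathcal{M}$ has as vertices the cells with infinite entries, adjacent when they share a row or column and all cells strictly between them are finite or empty. A consistent orientation of $\mathcal{M}$ is a pair of functions $c:[k]\to\{-1,1\}$, $r:[\ell]\to\{-1,1\}$ such that $c(i)r(j)>0$ whenever $\mathcal{M}_{i,j}=\mathrm{Inc}$ and $c(i)r(j)<0$ whenever $\mathcal{M}_{i,j}=\mathrm{Dec}$. Intervalicity $\mathrm{intv}(A)$ of $A\subseteq[n]$ is the least number of disjoint integer intervals with union $A$; the grid-complexity of a point set is the maximum of the intervalicities of its two axis projections. A grid tree of $\pi$ is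 a rooted binary tree whose leaves are labeled bijectively by the points of $\pi$, with grid-width the maximum over vertices $v$ of the grid-complexity of the leaf labels below $v$. The path-width of $\pi$ is the minimum grid-width over grid trees of $\pi$ that are caterpillars (every non-leaf vertex has at least one leaf child). *)

From mathcomp Require Import all_boot all_order all_fingroup all_algebra.
Set Implicit Arguments. Unset Strict Implicit. Unset Printing Implicit Defensive.
Import GRing.Theory Num.Theory.

Inductive entry := Inc | Dec | Empt.

Definition entry_eqb (a b : entry) : bool :=
  match a, b with Inc, Inc | Dec, Dec | Empt, Empt => true | _, _ => false end.

(* A k x l monotone gridding matrix: M i j, i column (left to right),
   j row (bottom to top).  Indices are 0-based. *)
Definition gmatrix (k l : nat) := 'I_k -> 'I_l -> entry.

(* A permutation pi of length n is an element of 'S_n; its diagram is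
   {(x, pi x) | x : 'I_n} (0-based coordinates). *)

(* A k-gridding of [n] by consecutive, possibly empty, intervals
   I_0 < ... < I_{k-1} with union [n] is encoded by the nondecreasing map
   sending each x in [n] to the index of the interval containing it. *)
Definition interval_partition (n k : nat) (f : 'I_n -> 'I_k) : Prop :=
  forall x y : 'I_n, x <= y -> f x <= f y.

Definition in_cell n k l (pi : 'S_n) (cf : 'I_n -> 'I_k) (rf : 'I_n -> 'I_l)
  (i : 'I_k) (j : 'I_l) (x : 'I_n) : Prop := cf x = i /\ rf (pi x) = j.

Definition cell_ok n k l (pi : 'S_n) (cf : 'I_n -> 'I_k) (rf : 'I_n -> 'I_l)
  (i : 'I_k) (j : 'I_l) (e : entry) : Prop :=
  match e with
  | Inc => forall x y, in_cell pi cf rf i j x -> in_cell pi cf rf i j y ->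
             x < y -> pi x < pi y
  | Dec => forall x y, in_cell pi cf rf i j x -> in_cell pi cf rf i j y ->
             x < y -> pi y < pi x
  | Empt => forall x, ~ in_cell pi cf rf i j x
  end.

Definition is_M_gridding n k l (M : gmatrix k l) (pi : 'S_n)
  (cf : 'I_n -> 'I_k) (rf : 'I_n -> 'I_l) : Prop :=
  interval_partition cf /\ interval_partition rf /\
  forall i j, cell_ok pi cf rf i j (M i j).

Definition in_Grid n k l (M : gmatrix k l) (pi : 'S_n) : Prop :=
  exists cf rf, is_M_gridding M pi cf rf.

Definition nonempty_cell k l (M : gmatrix k l) (c : 'I_k * 'I_l) : bool :=
  ~~ entry_eqb (M c.1 c.2) Empt.

Definition strictly_between (a b x : nat) : bool :=
  (minn a b < x) && (x < maxn a b).

Definition cell_adj k l (M : gmatrix k l) : rel ('I_k * 'I_l) :=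
  fun c d =>
    [&& nonempty_cell M c, nonempty_cell M d, c != d &
     ((c.1 == d.1) &&
        [forall j : 'I_l, strictly_between c.2 d.2 j ==> entry_eqb (M c.1 j) Empt])
     || ((c.2 == d.2) &&
        [forall i : 'I_k, strictly_between c.1 d.1 i ==> entry_eqb (M i c.2) Empt])].

(* A (simple undirected) graph given by a symmetric irreflexive relation is
   a forest if it has no cycle: no duplicate-free closed walk on >= 3
   vertices. *)
Definition forest (T : finType) (e : rel T) : Prop :=
  forall s : seq T, uniq s -> 2 < size s -> ~~ path.cycle e s.

Definition consistent_orientation k l (M : gmatrix k l) : Prop :=
  exists (c : 'I_k -> int) (r : 'I_l -> int),
    (forall i, (c i = 1 \/ c i = -1)%R) /\ (forall j, (r j = 1 \/ r j = -1)%R) /\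
    (forall i j, M i j = Inc -> (0 < c i * r j)%R) /\
    (forall i j, M i j = Dec -> (c i * r j < 0)%R).

(* Intervalicity of a subset B of [n]: the least number of pairwise disjoint
   integer intervals whose union is B.  Nonempty intervals [a,b) inside [n]
   are encoded by pairs (a,b) with a < b <= n. *)
Definition interval_decomp n (B : {set 'I_n}) (D : {set 'I_n.+1 * 'I_n.+1}) : bool :=
  [&& [forall p in D, p.1 < p.2],
      [forall p in D, forall q in D, (p != q) ==>
         [forall x : 'I_n, ~~ ((p.1 <= x < p.2) && (q.1 <= x < q.2))]] &
      [forall x : 'I_n, (x \in B) == [exists p in D, p.1 <= x < p.2]]].

Definition has_decomp_of_size n (B : {set 'I_n}) (m : nat) : bool :=
  [exists D : {set 'I_n.+1 * 'I_n.+1}, (#|D| == m) && interval_decomp B D].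

(* least m (there is always one, m <= n, e.g. singletons) *)
Definition intv n (B : {set 'I_n}) : nat :=
  find (has_decomp_of_size B) (iota 0 n.+1).

Definition grid_complexity n (pi : 'S_n) (A : {set 'I_n}) : nat :=
  maxn (intv A) (intv (pi @: A)).

(* Rooted binary trees with leaves labelled by points (identified with their
   x-coordinate x : 'I_n, the point being (x, pi x)). *)
Inductive gtree (n : nat) :=
  | Leaf of 'I_n
  | Node of gtree n & gtree n.

Fixpoint leaves n (t : gtree n) : seq 'I_n :=
  match t with Leaf x => [:: x] | Node a b => leaves a ++ leaves b end.

Definition is_leaf n (t : gtree n) : bool :=
  if t is Leaf _ then true else false.

Definition grid_tree n (t : gtree n) : Prop := perm_eq (leaves t) (enum 'I_n).

Fixpoint grid_width n (pi : 'S_n) (t : gtree n) : nat :=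
  match t with
  | Leaf x => grid_complexity pi [set x]
  | Node a b => maxn (grid_complexity pi [set x in leaves t])
                     (maxn (grid_width pi a) (grid_width pi b))
  end.

Fixpoint caterpillar n (t : gtree n) : bool :=
  match t with
  | Leaf _ => true
  | Node a b => (is_leaf a || is_leaf b) && caterpillar a && caterpillar b
  end.

Definition pathwidth_le n (pi : 'S_n) (w : nat) : Prop :=
  exists t : gtree n, grid_tree t /\ caterpillar t /\ grid_width pi t <= w.

From mathcomp Require Import all_boot all_order all_fingroup all_algebra.
From mathcomp Require Import zify.
Set Implicit Arguments. Unset Strict Implicit. Unset Printing Implicit Defensive.

(* Fix an M-gridding (cf, rf) of pi and a consistent orientation, recorded
   by booleans dc, dr telling in which direction each column and each row is
   traversed.  A point p steps to a point q when they share a column and q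
   follows p in the direction of that column, or share a row and q follows p
   in the direction of that row.  Consistency makes both directions agree
   inside each cell, and as the cell graph is a forest the step relation is
   acyclic: a leaf cell is alone in its row or in its column, so steps
   through its points compose, and deleting these points from a cycle leaves
   a cycle in the smaller forest obtained by emptying the leaf.
   Listing the points in a topological order of the steps, every prefix is
   closed under step-predecessors, hence meets every column and every row of
   the gridding in an interval, so its grid-complexity is at most max(k, l).
   The caterpillar adding the points one at a time in this order thus has
   grid-width at most max(k, l). *)

Section Runs.
Variables (n : nat) (B : {set 'I_n}).

Definition memB (y : nat) : bool := [exists z in B, val z == y].

Lemma memB_ord (z : 'I_n) : memB z = (z \in B).
Proof.
apply/existsP/idP => [[w /andP[wB /eqP /val_inj <-]] // | zB].
by exists z; rewrite zB eqxx.
Qed.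

Lemma memB_lt y : memB y -> y < n.
Proof. case/existsP => z /andP[_ /eqP <-]; exact: ltn_ord. Qed.

Lemma run_end_exists x : exists y, (x <= y) && ~~ memB y.
Proof.
exists (maxn x n); rewrite leq_maxl /=.
by apply/negP => /memB_lt; rewrite ltnNge leq_maxr.
Qed.

(* The first point at or after x that is not in B: if x is in B, then
   [x, run_end x) is the maximal run of B starting at x. *)
Definition run_end x : nat := ex_minn (run_end_exists x).

Lemma run_endP x :
  [/\ x <= run_end x, ~~ memB (run_end x) &
      forall y, x <= y -> y < run_end x -> memB y].
Proof.
rewrite /run_end; case: ex_minnP => e /andP[xe ne] emin; split => //.
move=> y xy ye; apply: contraTT ye => ny; rewrite -leqNgt.
by apply: emin; rewrite xy.
Qed.

Lemma run_end_gt x : memB x -> x < run_end x.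
Proof.
have [xe ne _] := run_endP x => Bx; rewrite ltn_neqAle xe andbT.
by apply: contraNneq ne => <-.
Qed.

Lemma run_end_le x : x <= n -> run_end x <= n.
Proof.
move=> xn; rewrite /run_end; case: ex_minnP => e _ emin.
by apply: emin; rewrite xn /=; apply/negP => /memB_lt; rewrite ltnn.
Qed.

Definition starts : {set 'I_n} :=
  [set x | (x \in B) && ((x == 0 :> nat) || ~~ memB x.-1)].

Lemma run_end_le_start (x y : 'I_n) :
  y \in starts -> x < y -> run_end x <= y.
Proof.
rewrite inE => /andP[_ /orP[/eqP y0 | ny]] xy; first by move: xy; rewrite y0.
have [_ _ inrun] := run_endP x.
apply: contraNT ny; rewrite -ltnNge => ye; apply: inrun; lia.
Qed.

Lemma run_cover y :
  memB y -> exists2 x, x \in starts & x <= y < run_end x.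
Proof.
elim: y => [|y IH] By; have ylt := memB_lt By.
  exists (Ordinal ylt); last by rewrite /= run_end_gt.
  by rewrite inE -memB_ord By.
have [Bprev | nprev] := boolP (memB y); last first.
  exists (Ordinal ylt); last by rewrite /= leqnn run_end_gt.
  by rewrite inE -memB_ord By /= nprev.
have [x xs /andP[xy yr]] := IH Bprev; exists x => //.
have [_ nr _] := run_endP x.
rewrite (leq_trans xy) //= ltn_neqAle yr andbT.
by apply: contraNneq nr => <-.
Qed.

Definition run_interval (x : 'I_n) : 'I_n.+1 * 'I_n.+1 :=
  (inord x, inord (run_end x)).

Lemma run_interval1 x : val (run_interval x).1 = x.
Proof. by rewrite /= inordK // ltnS ltnW. Qed.

Lemma run_interval2 x : val (run_interval x).2 = run_end x.
Proof. by rewrite /= inordK // ltnS run_end_le // ltnW. Qed.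

Lemma runs_decomp : has_decomp_of_size B #|starts|.
Proof.
apply/existsP; exists (run_interval @: starts).
have inj : {in starts &, injective run_interval}.
  by move=> x y _ _ e; apply: ord_inj; rewrite -run_interval1 e run_interval1.
rewrite card_in_imset // eqxx /=; apply/and3P; split.
- apply/forallP => p; apply/implyP => /imsetP[x xs ->].
  rewrite run_interval1 run_interval2 run_end_gt // memB_ord.
  by move: xs; rewrite inE => /andP[].
- apply/forallP => p; apply/implyP => /imsetP[x xs ->].
  apply/forallP => q; apply/implyP => /imsetP[y ys ->].
  apply/implyP => neq; apply/forallP => w.
  rewrite !run_interval1 !run_interval2.
  case: (ltngtP x y) => [lt|lt|/ord_inj xy]; last by rewrite xy eqxx in neq.
    by have := run_end_le_start ys lt; lia.
  by have := run_end_le_start xs lt; lia.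
- apply/forallP => z; apply/eqP; apply/idP/idP => [zB|/existsP[p /andP[/imsetP[x _ ->]]]].
    have [x xs zr] := run_cover (etrans (memB_ord z) zB).
    apply/existsP; exists (run_interval x).
    by rewrite imset_f // run_interval1 run_interval2.
  rewrite run_interval1 run_interval2 => /andP[xz zr].
  by have [_ _ inrun] := run_endP x; rewrite -memB_ord inrun.
Qed.

Lemma intv_le_starts : intv B <= #|starts|.
Proof.
have starts_le : #|starts| <= n by rewrite -[n in _ <= n]card_ord max_card.
rewrite /intv; set m := find _ _; case: (leqP m #|starts|) => // lt.
by have := before_find 0 lt; rewrite nth_iota ?add0n ?runs_decomp // ltnS.
Qed.

End Runs.

Definition block_convex n m (f : 'I_n -> 'I_m) (B : {set 'I_n}) : Prop :=
  forall x y z : 'I_n, x < y < z -> x \in B -> z \in B -> f x = f z -> y \in B.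

(* Two starts of runs of a block-convex set lie in different blocks, hence
   the intervalicity of B is at most the number m of blocks. *)
Lemma intv_le_blocks n m (f : 'I_n -> 'I_m) (B : {set 'I_n}) :
  interval_partition f -> block_convex f B -> intv B <= m.
Proof.
move=> fmono conv; apply: leq_trans (intv_le_starts B) _.
have block_sep x y : x \in starts B -> y \in starts B -> x < y -> f x != f y.
  rewrite !inE => /andP[xB _] /andP[yB /orP[/eqP y0|ny]] xy.
    by move: xy; rewrite y0.
  have w_lt : y.-1 < n by have := ltn_ord y; lia.
  pose w := Ordinal w_lt.
  apply: contraNneq ny => fxy; rewrite -[y.-1]/(nat_of_ord w) memB_ord.
  have [xw | xw] := eqVneq x w; first by rewrite -xw.
  apply: (conv x w y) => //.
  have /eqP : nat_of_ord x != y.-1 := xw.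
  rewrite /=; lia.
have inj : {in starts B &, injective f}.
  move=> x y xs ys fxy; case: (ltngtP x y) => [lt|lt|/ord_inj //].
    by have := block_sep _ _ xs ys lt; rewrite fxy eqxx.
  by have := block_sep _ _ ys xs lt; rewrite fxy eqxx.
by rewrite -(card_in_imset inj) -[m in _ <= m]card_ord max_card.
Qed.

Lemma block_convex1 n m (f : 'I_n -> 'I_m) (y : 'I_n) : block_convex f [set y].
Proof.
move=> a b c /andP[ab bc]; rewrite !inE => /eqP ea /eqP ec.
by move: ab bc; rewrite ea ec; lia.
Qed.

Lemma grid_complexity_le n k l (pi : 'S_n)
    (cf : 'I_n -> 'I_k) (rf : 'I_n -> 'I_l) (A : {set 'I_n}) :
  interval_partition cf -> interval_partition rf ->
  block_convex cf A -> block_convex rf (pi @: A) ->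
  grid_complexity pi A <= maxn k l.
Proof.
move=> hcf hrf colA rowA; rewrite /grid_complexity geq_max.
rewrite (leq_trans (intv_le_blocks hcf colA)) ?leq_maxl //.
by rewrite (leq_trans (intv_le_blocks hrf rowA)) ?leq_maxr.
Qed.

Section MaximalPath.
Variables (T : finType) (e : rel T).

Lemma maximal_path x : exists s,
  [/\ path e x s, uniq (x :: s) & forall w, e (last x s) w -> w \in x :: s].
Proof.
suff grow m s : #|T| - size s <= m -> path e x s -> uniq (x :: s) -> exists s',
    [/\ path e x s', uniq (x :: s') & forall w, e (last x s') w -> w \in x :: s'].
  by apply: (grow #|T| [::]); rewrite ?subn0.
elim: m s => [|m IH] s hm ps us.
  exfalso; move: hm; rewrite leqn0 subn_eq0 leqNgt => /negP; apply.
  by have := max_card (mem (x :: s)); rewrite (card_uniqP us).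
have [/existsP[w /andP[ew wn]] | /existsPn stuck] :=
  boolP [exists w, e (last x s) w && (w \notin x :: s)]; last first.
  by exists s; split => // w ew; apply: contraT => wn; have := stuck w; rewrite ew wn.
apply: (IH (rcons s w)); first by rewrite size_rcons; lia.
  by rewrite rcons_path ps ew.
by rewrite -rcons_cons rcons_uniq wn.
Qed.

End MaximalPath.

Section ForestLeaf.
Variables (T : finType) (e : rel T).
Hypotheses (e_irr : irreflexive e) (e_forest : forest e).

(* In a forest, the only neighbour of the last vertex of a duplicate-free
   path that lies on the path is its predecessor: any other one closes a
   cycle on at least three vertices. *)
Lemma path_end_neighbour x s w :
  path e x s -> uniq (x :: s) -> w \in x :: s -> e (last x s) w ->
  exists q, x :: s = q ++ [:: w; last x s].
Proof.
move=> ps un win evw.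
move Ep : (x :: s) win un => p win un.
case/splitPr: win Ep un => p1 p2 Ep un.
have un2 : uniq (w :: p2) by move: un; rewrite cat_uniq => /and3P[].
have [pw lst] : path e w p2 /\ last x s = last w p2.
  move: ps; case: p1 Ep {un} => [[-> ->] // | y p1 [-> ->]].
  by rewrite cat_path last_cat /= => /andP[_ /andP[]].
rewrite lst in evw *.
case: p2 pw un2 evw {Ep un lst} => [|a [|b r]] pw un2 evw.
- by rewrite /= e_irr in evw.
- by exists p1.
- have cyc : path.cycle e (w :: a :: b :: r) by rewrite /path.cycle rcons_path pw.
  by have := e_forest un2 isT; rewrite cyc.
Qed.

Lemma forest_leaf (P : pred T) v0 :
  (forall u w, e u w -> P w) -> P v0 ->
  exists2 v, P v & forall w1 w2, e v w1 -> e v w2 -> w1 = w2.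
Proof.
move=> eP Pv0; have [s [ps us smax]] := maximal_path e v0.
exists (last v0 s).
  case/lastP: s ps {us smax} => [//|s y]; rewrite rcons_path last_rcons.
  by case/andP => _; apply: eP.
move=> w1 w2 /[dup] /smax w1s e1 /[dup] /smax w2s e2.
have [q1 E1] := path_end_neighbour ps us w1s e1.
have [q2 E2] := path_end_neighbour ps us w2s e2.
have E := etrans (esym E1) E2.
have sz : size q1 = size q2 by have := congr1 size E; rewrite !size_cat => /addIn.
have := congr1 (fun t => nth w1 t (size q1)) E.
by rewrite /= !nth_cat -sz ltnn subnn.
Qed.

End ForestLeaf.

Lemma forest_subrel (T : finType) (e e' : rel T) :
  subrel e' e -> forest e -> forest e'.
Proof. by move=> sub fo s us ss; apply: contra (fo s us ss); apply: sub_cycle. Qed.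

Section SkipVertices.
Variables (T : eqType) (e : rel T) (keep : pred T).

Definition skippable (z : T) : Prop := forall u v, e u z -> e z v -> e u v.

(* Invariant of the deletion: a is the last kept vertex so far, and the
   current vertex b is either a itself or a deleted successor of a. *)
Lemma path_skip s : forall a b, keep a -> (b = a \/ (e a b /\ ~~ keep b)) ->
  (forall z, z \in b :: s -> ~~ keep z -> skippable z) ->
  path e b s -> path e a (filter keep s).
Proof.
elim: s => [//|y s IH] a b ka hab hskip /= /andP[eby ps].
have eay : e a y.
  case: hab => [ba | [eab kb]]; first by rewrite -ba.
  by apply: (hskip b) => //; exact: mem_head.
have hskip' z : z \in y :: s -> ~~ keep z -> skippable z.
  by move=> zin; apply: hskip; rewrite in_cons zin orbT.
case: ifP => ky /=; first by rewrite eay; apply: (IH y y) => //; left.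
by apply: (IH a y) => //; right; rewrite ky.
Qed.

Lemma cycle_skip x s :
  keep x -> (forall z, z \in x :: s -> ~~ keep z -> skippable z) ->
  path.cycle e (x :: s) -> path.cycle e (filter keep (x :: s)).
Proof.
move=> kx hskip /= hc; rewrite kx /=.
have -> : rcons (filter keep s) x = filter keep (rcons s x) by rewrite filter_rcons kx.
apply: (path_skip (b := x)) => //; first by left.
by move=> z; rewrite in_cons mem_rcons in_cons orbA orbb; exact: hskip.
Qed.

End SkipVertices.

Lemma transitive_cycle_loop (T : eqType) (e : rel T) x s :
  transitive e -> path.cycle e (x :: s) -> e x x.
Proof.
move=> tr /= /(order_path_min tr) /allP; apply; by rewrite mem_rcons mem_head.
Qed.

Lemma nearest_on_side m (P : pred 'I_m) (a b : 'I_m) :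
  P b -> a != b -> exists c : 'I_m,
    [/\ P c, c != a, (a < c) = (a < b) &
      forall x : 'I_m, strictly_between a c x -> ~~ P x].
Proof.
move=> Pb ab.
pose Q c := [&& P c, c != a & (a < c) == (a < b)].
have Qb : Q b by rewrite /Q Pb eq_sym ab eqxx.
have [c /and3P[Pc ca /eqP side] cmin] := arg_minnP (fun c : 'I_m => (c - a) + (a - c)) Qb.
exists c; split => // x sx; apply/negP => Px.
have Qx : Q x.
  rewrite /Q Px /= -side; move: sx; rewrite /strictly_between => sx.
  apply/andP; split; first by apply/eqP => xa; move: sx; rewrite xa; lia.
  by apply/eqP; apply/idP/idP => ?; lia.
have := cmin x Qx; move: sx; rewrite /strictly_between; lia.
Qed.

Section CellGraph.
Variables (k l : nat) (M : gmatrix k l).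

Lemma cell_adj_irr : irreflexive (cell_adj M).
Proof. by move=> c; rewrite /cell_adj eqxx /= !andbF. Qed.

Lemma cell_adj_nonempty c d : cell_adj M c d -> nonempty_cell M d.
Proof. by case/and4P. Qed.

Lemma column_neighbour (i : 'I_k) (j j' : 'I_l) :
  nonempty_cell M (i, j) -> nonempty_cell M (i, j') -> j != j' ->
  exists j2 : 'I_l, (j < j2) = (j < j') /\ cell_adj M (i, j) (i, j2).
Proof.
move=> nej nej' jj'.
have [j2 [nej2 j2j side gap]] :=
  nearest_on_side (P := fun y => nonempty_cell M (i, y)) nej' jj'.
exists j2; split => //.
rewrite /cell_adj nej nej2 xpair_eqE eqxx [j == j2]eq_sym j2j /=.
apply/orP; left; apply/forallP => y; apply/implyP => /gap.
by rewrite /nonempty_cell negbK.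
Qed.

Lemma row_neighbour (i i' : 'I_k) (j : 'I_l) :
  nonempty_cell M (i, j) -> nonempty_cell M (i', j) -> i != i' ->
  exists i2 : 'I_k, (i < i2) = (i < i') /\ cell_adj M (i, j) (i2, j).
Proof.
move=> nei nei' ii'.
have [i2 [nei2 i2i side gap]] :=
  nearest_on_side (P := fun x => nonempty_cell M (x, j)) nei' ii'.
exists i2; split => //.
rewrite /cell_adj nei nei2 xpair_eqE eqxx andbT [i == i2]eq_sym i2i /=.
apply/orP; right; apply/forallP => x; apply/implyP => /gap.
by rewrite /nonempty_cell negbK.
Qed.

Definition at_most_one_neighbour (X : 'I_k * 'I_l) : Prop :=
  forall d1 d2, cell_adj M X d1 -> cell_adj M X d2 -> d1 = d2.

(* A leaf cell is the only nonempty cell of its column or of its row: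
   otherwise it would have a neighbour in each. *)
Lemma leaf_alone (i : 'I_k) (j : 'I_l) :
  nonempty_cell M (i, j) -> at_most_one_neighbour (i, j) ->
  (forall j', j' != j -> ~~ nonempty_cell M (i, j')) \/
  (forall i', i' != i -> ~~ nonempty_cell M (i', j)).
Proof.
move=> ne leaf.
case: (boolP [forall j', (j' != j) ==> ~~ nonempty_cell M (i, j')]) => [alone|].
  by left => j' j'j; move/forallP/(_ j')/implyP: alone; apply.
case/forallPn => j'; rewrite negb_imply negbK => /andP[j'j nej'].
right => i' i'i; apply/negP => nei'.
rewrite eq_sym in j'j; rewrite eq_sym in i'i.
have [j2 [_ adj_col]] := column_neighbour ne nej' j'j.
have [i2 [_ adj_row]] := row_neighbour ne nei' i'i.
case: (leaf _ _ adj_col adj_row) => _ ej2.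
by move: adj_col; rewrite ej2 cell_adj_irr.
Qed.

(* A leaf cell does not lie strictly between two nonempty cells of its
   column (resp. row): its neighbours towards both would be distinct. *)
Lemma leaf_not_between_col (i : 'I_k) (x c d : 'I_l) :
  nonempty_cell M (i, x) -> at_most_one_neighbour (i, x) ->
  nonempty_cell M (i, c) -> nonempty_cell M (i, d) -> ~~ strictly_between c d x.
Proof.
move=> nex leaf nec ned; apply/negP; rewrite /strictly_between => sb.
have xc : x != c by apply/eqP => e; move: sb; rewrite e; lia.
have xd : x != d by apply/eqP => e; move: sb; rewrite e; lia.
have [j1 [side1 adj1]] := column_neighbour nex nec xc.
have [j2 [side2 adj2]] := column_neighbour nex ned xd.
case: (leaf _ _ adj1 adj2) => e12; rewrite e12 side2 in side1.
by move: side1 sb; case: ltnP; case: ltnP => //; lia.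
Qed.

Lemma leaf_not_between_row (x c d : 'I_k) (j : 'I_l) :
  nonempty_cell M (x, j) -> at_most_one_neighbour (x, j) ->
  nonempty_cell M (c, j) -> nonempty_cell M (d, j) -> ~~ strictly_between c d x.
Proof.
move=> nex leaf nec ned; apply/negP; rewrite /strictly_between => sb.
have xc : x != c by apply/eqP => e; move: sb; rewrite e; lia.
have xd : x != d by apply/eqP => e; move: sb; rewrite e; lia.
have [i1 [side1 adj1]] := row_neighbour nex nec xc.
have [i2 [side2 adj2]] := row_neighbour nex ned xd.
case: (leaf _ _ adj1 adj2) => e12; rewrite e12 side2 in side1.
by move: side1 sb; case: ltnP; case: ltnP => //; lia.
Qed.

Definition remove_cell (X : 'I_k * 'I_l) : gmatrix k l :=
  fun i j => if (i, j) == X then Empt else M i j.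

Lemma nonempty_remove X c :
  nonempty_cell (remove_cell X) c = (c != X) && nonempty_cell M c.
Proof. by case: c => i j; rewrite /nonempty_cell /remove_cell /=; case: ifP. Qed.

Lemma remove_leaf_adj X :
  nonempty_cell M X -> at_most_one_neighbour X ->
  subrel (cell_adj (remove_cell X)) (cell_adj M).
Proof.
case: X => x1 x2 neX leaf [c1 c2] [d1 d2].
rewrite /cell_adj !nonempty_remove => /and4P[/andP[_ nec] /andP[_ ned] cd adj].
rewrite nec ned cd /=; rewrite /= in adj.
case/orP: adj => /andP[/eqP same /forallP gap]; apply/orP; [left|right];
  rewrite -same eqxx /=; apply/forallP => y; apply/implyP => sb;
  move/implyP/(_ sb): (gap y); rewrite /remove_cell -{}same in ned *;
  case: ifP => // /eqP [] ? ?; subst.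
  by case/negP: (leaf_not_between_col neX leaf nec ned).
by case/negP: (leaf_not_between_row neX leaf nec ned).
Qed.

End CellGraph.

Lemma orientation_bool k l (M : gmatrix k l) : consistent_orientation M ->
  exists (dc : 'I_k -> bool) (dr : 'I_l -> bool),
    (forall i j, M i j = Inc -> dc i = dr j) /\
    (forall i j, M i j = Dec -> dc i != dr j).
Proof.
case=> c [r [hc [hr [hInc hDec]]]].
exists (fun i => c i == 1%R), (fun j => r j == 1%R); split => i j.
  by move/hInc; case: (hc i) => ->; case: (hr j) => ->.
by move/hDec; case: (hc i) => ->; case: (hr j) => ->.
Qed.

Section StepRelation.
Variables (n k l : nat) (pi : 'S_n) (cf : 'I_n -> 'I_k) (rf : 'I_n -> 'I_l)
  (dc : 'I_k -> bool) (dr : 'I_l -> bool).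

Definition point_cell (p : 'I_n) : 'I_k * 'I_l := (cf p, rf (pi p)).

Definition col_step (p q : 'I_n) : bool :=
  (cf p == cf q) && (if dc (cf p) then p < q else q < p).
Definition row_step (p q : 'I_n) : bool :=
  (rf (pi p) == rf (pi q)) && (if dr (rf (pi p)) then pi p < pi q else pi q < pi p).
Definition step (p q : 'I_n) : bool := col_step p q || row_step p q.

Lemma col_step_trans : transitive col_step.
Proof.
move=> y x z /andP[/eqP e1 h1] /andP[/eqP e2 h2]; rewrite /col_step e1 e2 eqxx /=.
by move: h1 h2; rewrite e1 -e2; case: (dc _) => /=; lia.
Qed.

Lemma row_step_trans : transitive row_step.
Proof.
move=> y x z /andP[/eqP e1 h1] /andP[/eqP e2 h2]; rewrite /row_step e1 e2 eqxx /=.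
by move: h1 h2; rewrite e1 -e2; case: (dr _) => /=; lia.
Qed.

Lemma col_step_irr : irreflexive col_step.
Proof. by move=> p; rewrite /col_step; case: (dc _); rewrite ltnn andbF. Qed.

Hypothesis cell_consistent :
  forall p q, point_cell p = point_cell q -> col_step p q = row_step p q.

Definition step_in (M : gmatrix k l) (p q : 'I_n) : bool :=
  [&& nonempty_cell M (point_cell p), nonempty_cell M (point_cell q) & step p q].

Lemma col_step_at_row_alone M u z :
  (forall i, i != cf z -> ~~ nonempty_cell M (i, rf (pi z))) ->
  nonempty_cell M (point_cell u) ->
  (step u z -> col_step u z) /\ (step z u -> col_step z u).
Proof.
move=> alone neu.
have same_cell : rf (pi u) = rf (pi z) -> point_cell u = point_cell z.
  move=> er; rewrite /point_cell er; congr (_, _); apply/eqP.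
  by apply: contraLR neu => nc; rewrite /point_cell er; apply: alone.
split => /orP[// | /[dup] rs /andP[/eqP er _]].
  by rewrite cell_consistent ?same_cell.
by rewrite cell_consistent // (same_cell (esym er)).
Qed.

Lemma row_step_at_col_alone M u z :
  (forall j, j != rf (pi z) -> ~~ nonempty_cell M (cf z, j)) ->
  nonempty_cell M (point_cell u) ->
  (step u z -> row_step u z) /\ (step z u -> row_step z u).
Proof.
move=> alone neu.
have same_cell : cf u = cf z -> point_cell u = point_cell z.
  move=> ec; rewrite /point_cell ec; congr (_, _); apply/eqP.
  by apply: contraLR neu => nr; rewrite /point_cell ec; apply: alone.
split => /orP[/[dup] cs /andP[/eqP ec _] | //].
  by rewrite -cell_consistent ?same_cell.
by rewrite -cell_consistent // (same_cell (esym ec)).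
Qed.

Lemma leaf_point_skippable M z :
  nonempty_cell M (point_cell z) -> at_most_one_neighbour M (point_cell z) ->
  skippable (step_in M) z.
Proof.
move=> nez leaf u v /and3P[neu _ uz] /and3P[_ nev zv]; rewrite /step_in neu nev /=.
case: (leaf_alone nez leaf) => [col_alone | row_alone].
  have [uz' _] := row_step_at_col_alone col_alone neu.
  have [_ zv'] := row_step_at_col_alone col_alone nev.
  by rewrite /step (row_step_trans (uz' uz) (zv' zv)) orbT.
have [uz' _] := col_step_at_row_alone row_alone neu.
have [_ zv'] := col_step_at_row_alone row_alone nev.
by rewrite /step (col_step_trans (uz' uz) (zv' zv)).
Qed.

(* Inside a single cell, steps are column steps, which cannot cycle. *)
Lemma no_cycle_in_one_cell X x s :
  all (fun p => point_cell p == X) (x :: s) -> ~~ path.cycle step (x :: s).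
Proof.
move=> inX; apply/negP => cyc.
have col_cyc : path.cycle col_step (x :: s).
  apply: (sub_in_cycle _ inX cyc) => p q /eqP pX /eqP qX /orP[// | rs].
  by rewrite cell_consistent // pX qX.
by have := transitive_cycle_loop col_step_trans col_cyc; rewrite col_step_irr.
Qed.

(* The cells of a forest can be peeled off leaf by leaf, so the step
   relation on points of nonempty cells has no cycle. *)
Lemma step_in_acyclic N M :
  #|[set c | nonempty_cell M c]| <= N -> forest (cell_adj M) ->
  forall s, path.cycle (step_in M) s -> s = [::].
Proof.
elim: N M => [|N IH] M hN fo [//|x s] cyc; exfalso;
  have nex : nonempty_cell M (point_cell x)
    by have := next_cycle cyc (mem_head x s); case/and3P.
  move: hN; rewrite leqn0 cards_eq0 => /eqP /setP /(_ (point_cell x)).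
  by rewrite !inE nex.
have [X neX leafX] := forest_leaf (cell_adj_irr M) fo (@cell_adj_nonempty _ _ M) nex.
pose keep p := point_cell p != X.
have [/hasP[y ys ky] | /hasPn allX] := boolP (has keep (x :: s)); last first.
  have inX : all (fun p => point_cell p == X) (x :: s).
    by apply/allP => p /allX; rewrite negbK.
  by case/negP: (no_cycle_in_one_cell inX); apply: sub_cycle cyc => p q /and3P[].
have [i s' rot_s] := rot_to ys.
have cyc' : path.cycle (step_in M) (y :: s') by rewrite -rot_s rot_cycle.
have skip z : z \in y :: s' -> ~~ keep z -> skippable (step_in M) z.
  by move=> _; rewrite negbK => /eqP zX; apply: leaf_point_skippable; rewrite zX.
have M'_cyc : path.cycle (step_in (remove_cell M X)) (filter keep (y :: s')).
  apply: (sub_in_cycle _ (filter_all keep _) (cycle_skip ky skip cyc')).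
  move=> p q kp kq; rewrite /step_in !nonempty_remove.
  by move: kp kq; rewrite !unfold_in => -> ->.
have M'_forest : forest (cell_adj (remove_cell M X)).
  exact: forest_subrel (remove_leaf_adj neX leafX) fo.
have M'_card : #|[set c | nonempty_cell (remove_cell M X) c]| <= N.
  have : [set c | nonempty_cell (remove_cell M X) c] \proper [set c | nonempty_cell M c].
    apply/properP; split; last by exists X; rewrite !inE // nonempty_remove eqxx.
    by apply/subsetP => c; rewrite !inE nonempty_remove => /andP[].
  by move/proper_card; lia.
by have := IH _ M'_card M'_forest _ M'_cyc; rewrite /= ky.
Qed.

End StepRelation.

Definition comb n (x0 : 'I_n) (s : seq 'I_n) : gtree n :=
  foldl (fun t y => Node t (Leaf y)) (Leaf x0) s.

Lemma comb_rcons n (x0 : 'I_n) s y :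
  comb x0 (rcons s y) = Node (comb x0 s) (Leaf y).
Proof. by rewrite /comb foldl_rcons. Qed.

Lemma leaves_comb n (x0 : 'I_n) s : leaves (comb x0 s) = x0 :: s.
Proof. by elim/last_ind: s => [//|s y IH]; rewrite comb_rcons /= IH cats1. Qed.

Lemma caterpillar_comb n (x0 : 'I_n) s : caterpillar (comb x0 s).
Proof. by elim/last_ind: s => [//|s y IH]; rewrite comb_rcons /= IH orbT. Qed.

(* The vertices of the comb carry singletons and prefixes of x0 :: s. *)
Lemma grid_width_comb n (pi : 'S_n) W (x0 : 'I_n) s :
  (forall y, grid_complexity pi [set y] <= W) ->
  (forall A, prefix A (x0 :: s) -> grid_complexity pi [set z in A] <= W) ->
  grid_width pi (comb x0 s) <= W.
Proof.
elim/last_ind: s => [|s y IH] single pref; first exact: single.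
rewrite comb_rcons /= leaves_comb cats1 geq_max; apply/andP; split.
  exact: (pref _ (prefix_refl _)).
rewrite geq_max; apply/andP; split => //.
apply: IH => // A /prefix_trans pA; apply/pref/pA.
exact: (prefix_rcons (x0 :: s) y).
Qed.

Lemma pathwidth_of_listing n (pi : 'S_n) W (s : seq 'I_n) :
  0 < n -> perm_eq s (enum 'I_n) ->
  (forall y, grid_complexity pi [set y] <= W) ->
  (forall A, prefix A s -> grid_complexity pi [set z in A] <= W) ->
  pathwidth_le pi W.
Proof.
case: s => [|x0 s] n0 perm single pref.
  by move: (perm_size perm); rewrite size_enum_ord /= => n0'; rewrite -n0' in n0.
exists (comb x0 s); split; last split.
- by rewrite /grid_tree leaves_comb.
- exact: caterpillar_comb.
- exact: grid_width_comb.
Qed.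

Lemma ltn_transfer (a b x y : nat) :
  (a < b -> x < y) -> (b < a -> y < x) -> (a = b -> x = y) -> (a < b) = (x < y).
Proof.
move=> h1 h2 h3.
case: (ltngtP a b) => [/h1 -> // | /h2 yx | /h3 ->]; last by rewrite ltnn.
by apply/esym/negbTE; rewrite -leqNgt ltnW.
Qed.

Section Gridding.
Variables (n k l : nat) (M : gmatrix k l) (pi : 'S_n)
  (cf : 'I_n -> 'I_k) (rf : 'I_n -> 'I_l) (dc : 'I_k -> bool) (dr : 'I_l -> bool).
Hypotheses (hcf : interval_partition cf) (hrf : interval_partition rf)
  (hcell : forall i j, cell_ok pi cf rf i j (M i j)).
Hypotheses (hInc : forall i j, M i j = Inc -> dc i = dr j)
  (hDec : forall i j, M i j = Dec -> dc i != dr j).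
Hypothesis M_forest : forest (cell_adj M).

Local Notation point_cell := (point_cell pi cf rf).
Local Notation step := (step pi cf rf dc dr).

Lemma cell_order p q : point_cell p = point_cell q ->
  [/\ (p < q) = (pi p < pi q), (q < p) = (pi q < pi p) & M (cf q) (rf (pi q)) = Inc]
  \/ [/\ (p < q) = (pi q < pi p), (q < p) = (pi p < pi q) & M (cf q) (rf (pi q)) = Dec].
Proof.
case=> ec er; have inp : in_cell pi cf rf (cf q) (rf (pi q)) p by [].
have inq : in_cell pi cf rf (cf q) (rf (pi q)) q by [].
have := hcell (cf q) (rf (pi q)).
case: (M _ _) => cellP; [left | right | by case: (cellP p)];
  by split => //; apply: ltn_transfer => [?|?|/ord_inj ->] //; apply: cellP.
Qed.

Lemma gridding_consistent p q :
  point_cell p = point_cell q -> col_step cf dc p q = row_step pi rf dr p q.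
Proof.
move=> /[dup] [[ec er]] /cell_order.
rewrite /col_step /row_step ec er !eqxx /=.
case=> [[-> -> /hInc ->] // | [-> -> /hDec]].
by case: (dc _); case: (dr _).
Qed.

Lemma point_cell_nonempty p : nonempty_cell M (point_cell p).
Proof.
rewrite /nonempty_cell /=; have := hcell (cf p) (rf (pi p)).
by case: (M _ _) => // cellP; case: (cellP p).
Qed.

Lemma step_acyclic s : path.cycle step s -> s = [::].
Proof.
move=> cyc; apply: (step_in_acyclic gridding_consistent (leqnn _) M_forest).
by apply: sub_cycle cyc => p q pq; rewrite /step_in !point_cell_nonempty.
Qed.

(* The number of points from which q can be reached by steps; by
   acyclicity it strictly increases along every step. *)
Definition rank (q : 'I_n) : nat := #|[set p | connect step p q]|.

Lemma rank_lt p q : step p q -> rank p < rank q.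
Proof.
move=> pq; apply: proper_card; apply/properP; split.
  by apply/subsetP => z; rewrite !inE => zp; apply: connect_trans zp (connect1 pq).
exists q; rewrite !inE ?connect0 //; apply/negP => /connectP [pth qp lastp].
have := @step_acyclic (q :: pth); rewrite /= rcons_path qp -lastp pq.
by move/(_ isT).
Qed.

(* The points listed by nondecreasing rank: a topological order of steps. *)
Definition listing : seq 'I_n := sort (fun a b => rank a <= rank b) (enum 'I_n).

Lemma listing_perm : perm_eq listing (enum 'I_n).
Proof. exact: permEl (perm_sort _ _). Qed.

Definition step_closed (A : {set 'I_n}) : Prop :=
  forall a b, step a b -> b \in A -> a \in A.

(* A step never goes from a point of a suffix of the listing to a point of
   the prefix before it, since steps increase the rank. *)
Lemma prefix_listing_closed (A : seq 'I_n) :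
  prefix A listing -> step_closed [set z in A].
Proof.
case/prefixP => rest E a b ab; rewrite !inE => bA; apply: contraT => aA.
have a_rest : a \in rest.
  by have := mem_enum 'I_n a; rewrite -(perm_mem listing_perm) E mem_cat (negPf aA).
have : pairwise (fun a b => rank a <= rank b) listing.
  rewrite -sorted_pairwise; last by move=> y x z; apply: leq_trans.
  by apply: sort_sorted => x y; apply: leq_total.
rewrite E pairwise_cat => /and3P[/allrelP sorted_AB _ _].
by have := sorted_AB b a bA a_rest; have := rank_lt ab; lia.
Qed.

(* A step-closed set meets every column in an interval: a point between two
   of its points in a column precedes one of them. *)
Lemma step_closed_col_convex A : step_closed A -> block_convex cf A.
Proof.
move=> closed x y z /andP[xy yz] xA zA exz.
have eyx : cf y = cf x.
  have := hcf (ltnW xy); have := hcf (ltnW yz); rewrite -exz => h1 h2.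
  by apply: ord_inj; lia.
case D: (dc (cf x)); [apply: (closed y z) zA | apply: (closed y x) xA];
  by rewrite /step /col_step eyx D ?exz eqxx /= ?xy ?yz.
Qed.

Lemma step_closed_row_convex A : step_closed A -> block_convex rf (pi @: A).
Proof.
move=> closed u v w /andP[uv vw] /imsetP[a aA eu] /imsetP[b bA ew] eab; subst u w.
have eva : rf v = rf (pi a).
  have := hrf (ltnW uv); have := hrf (ltnW vw); rewrite -eab => h1 h2.
  by apply: ord_inj; lia.
have pc : pi ((pi^-1)%g v) = v by rewrite permKV.
apply/imsetP; exists ((pi^-1)%g v); last by rewrite pc.
case D: (dr (rf (pi a))); [apply: (closed _ b) bA | apply: (closed _ a) aA];
  by rewrite /step /row_step pc eva D ?eab eqxx /= ?uv ?vw orbT.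
Qed.

Lemma listing_prefix_complexity (A : seq 'I_n) :
  prefix A listing -> grid_complexity pi [set z in A] <= maxn k l.
Proof.
move/prefix_listing_closed => closed.
apply: (grid_complexity_le hcf hrf).
  exact: step_closed_col_convex.
exact: step_closed_row_convex.
Qed.

End Gridding.

Theorem mainTheorem3 (k l : nat) (M : gmatrix k l) :
  consistent_orientation M ->
  forest (cell_adj M) ->
  forall (n : nat) (pi : 'S_n), 0 < n -> in_Grid M pi ->
    pathwidth_le pi (maxn k l).
Proof.
move=> /orientation_bool [dc [dr [hInc hDec]]] M_forest n pi n0.
case=> cf [rf [hcf [hrf hcell]]].
apply: (pathwidth_of_listing (s := listing pi cf rf dc dr)) => //.
- exact: listing_perm.
- move=> y; apply: (grid_complexity_le hcf hrf); first exact: block_convex1.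
  by rewrite imset_set1; exact: block_convex1.
- exact: listing_prefix_complexity hcf hrf hcell hInc hDec M_forest.
Qed.
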